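(* Let $k\le n$ be a positive integer and $\epsilon\in(0,1)$. Suppose $f:2^E\times O^E\to\mathbb{R}_{\ge0}$ is worst-case monotone and worst-case submodular with respect to $p(\phi)$ and satisfies minimal dependency. Let $\pi^f$ be the adaptive stochastic worst-case greedy policy with parameters $k,\epsilon$, and let $\pi^*_{wc}$ maximize $f_{wc}(\pi)$ over all deterministic policies $\pi$ with $|E(\pi,\phi)|\le k$ for all $\phi\in U^+$. Then $$\tilde f_{wc}(\pi^f)\ \ge\ \Big(1-\frac1e-\epsilon\Big)f_{wc}(\pi^*_{wc}),$$ and $\pi^f$ performs a total of $O(n\log(1/\epsilon))$ evaluations of worst-case marginal utilities $f_{wc}(e\mid\psi)$.
   Context: Setting. $E$ is a finite set of $n$ items and $O$ a finite set of states. A realization is a function $\phi:E\to O$; $p$ is a probability distribution (prior) on the set of all realizations, $\Phi$ denotes a random realization with law $p$, and $U^+=\{\phi: p(\phi)>0\}$. A partial realization is a function $\psi:S\to O$ with $S\subseteq E$, $\mathrm{dom}(\psi)=S$; it is identified with the set of pairs $\{(e,\psi(e)):e\in S\}$, so $\psi\subseteq\psi'$ means $\mathrm{dom}(\psi)\subseteq\mathrm{dom}(\psi')$ and they agree on $\mathrm{dom}(\psi)$. A realization $\phi$ is consistent with $\psi$, written $\phi\sim\psi$, if it agrees with $\psi$ on $\mathrm{dom}(\psi)$. Only partial realizations with $\Pr[\Phi\sim\psi]>0$ are considered, and $p(\phi\mid\psi)=\Pr[\Phi=\phi\mid\Phi\sim\psi]$. For $S\subseteq E$ and a partial realization $\psi$,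 $f(S,\psi)=\mathbb{E}[f(S,\Phi)\mid\Phi\sim\psi]$. For $e\notin\mathrm{dom}(\psi)$, let $O(e,\psi)=\{o\in O:\exists\phi\text{ with }p(\phi\mid\psi)>0,\ \phi(e)=o\}$ and define the worst-case marginal utility $f_{wc}(e\mid\psi)=\min_{o\in O(e,\psi)}\{f(\mathrm{dom}(\psi)\cup\{e\},\psi\cup\{(e,o)\})-f(\mathrm{dom}(\psi),\psi)\}$. $f$ is worst-case submodular if $f_{wc}(e\mid\psi)\ge f_{wc}(e\mid\psi')$ for all partial realizations $\psi\subseteq\psi'$ and all $e\in E\setminus\mathrm{dom}(\psi')$; it is worst-case monotone if $f_{wc}(e\mid\psi)\ge0$ for all $\psi$ and $e\notin\mathrm{dom}(\psi)$. $f$ satisfies minimal dependency if $f(\mathrm{dom}(\psi),\psi)=f(\mathrm{dom}(\psi),\phi)$ for every partial realization $\psi$ and every $\phi\in U^+$ with $\phi\sim\psi$. Policies. A (deterministic) policy $\pi$ is a rule which, given the current observation (the partial realization of the items selected so far), either selects a new item or stops; after an item $e$ is selected under realization $\phi$, the state $\phi(e)$ is observed. A randomized policy may additionally use internal randomness independent of $\Phi$. $E(\pi,\phi)$ is the (possibly random) set of items selected by $\pi$ under $\phi$. For deterministic $\pi$, $f_{wc}(\pi)=\min_{\phi\in U^+}f(E(\pi,\phi),\phi)$; for a randomized policy the expected worst-case utility is $\tilde f_{wc}(\pi)=\min_{\phi\in U^+}\mathbb{E}[f(E(\pi,\phi),\phi)]$, the expectation over the policy's internal randomness. Adaptive stochastic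 worst-case greedy policy $\pi^f$: let $s=\lceil\frac nk\ln\frac1\epsilon\rceil$. Start with $\psi_0=\emptyset$; for $t=1,\dots,k$, draw a set $H$ uniformly at random among subsets of $E\setminus\mathrm{dom}(\psi_{t-1})$ of size $\min\{s,n-t+1\}$ (independently of everything else), select $e_t\in\arg\max_{e\in H}f_{wc}(e\mid\psi_{t-1})$, observe $\Phi(e_t)$, and set $\psi_t=\psi_{t-1}\cup\{(e_t,\Phi(e_t))\}$. *)

From HB Require Import structures.
From mathcomp Require Import all_boot all_order all_algebra.
From mathcomp Require Import all_classical all_reals all_analysis.
Set Implicit Arguments. Unset Strict Implicit. Unset Printing Implicit Defensive.
Import Order.TTheory GRing.Theory Num.Theory.
Local Open Scope ring_scope.

Section AdaptiveWC.
Variables (R : realType) (E O : finType).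
Variable p : {ffun E -> O} -> R.
Variable f : {set E} -> {ffun E -> O} -> R.

(* partial realizations: psi e = Some o iff e in dom psi and psi(e) = o *)
Definition dom (psi : {ffun E -> option O}) : {set E} := [set e | psi e != None].

Definition consistent (phi : {ffun E -> O}) (psi : {ffun E -> option O}) : bool :=
  [forall e, (psi e == None) || (psi e == Some (phi e))].

Definition prob (psi : {ffun E -> option O}) : R :=
  \sum_(phi | consistent phi psi) p phi.

Definition fpart (S : {set E}) (psi : {ffun E -> option O}) : R :=
  (\sum_(phi | consistent phi psi) p phi * f S phi) / prob psi.

Definition extend (psi : {ffun E -> option O}) (e : E) (o : O) : {ffun E -> option O} :=
  [ffun x => if x == e then Some o else psi x].

Definition subpart (psi psi' : {ffun E -> option O}) : bool :=
  [forall e, (psi e == None) || (psi' e == psi e)].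

(* O(e, psi): p(phi | psi) > 0 iff p phi > 0 and phi ~ psi (when Pr[psi] > 0) *)
Definition outcomes (e : E) (psi : {ffun E -> option O}) : {set O} :=
  [set o | [exists phi, [&& 0 < p phi, consistent phi psi & phi e == o]]].

Definition marg (e : E) (psi : {ffun E -> option O}) (o : O) : R :=
  fpart (e |: dom psi) (extend psi e o) - fpart (dom psi) psi.

(* worst-case marginal utility f_wc(e | psi) (min over the nonempty set O(e,psi);
   the default 0 is never used for positive-probability psi) *)
Definition fwc (e : E) (psi : {ffun E -> option O}) : R :=
  match [pick o in outcomes e psi] with
  | Some o0 => \big[Num.min/marg e psi o0]_(o in outcomes e psi) marg e psi o
  | None => 0
  end.

Definition wc_submodular : Prop :=
  forall psi psi' : {ffun E -> option O}, 0 < prob psi -> 0 < prob psi' ->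
    subpart psi psi' -> forall e, e \notin dom psi' -> fwc e psi' <= fwc e psi.

Definition wc_monotone : Prop :=
  forall psi : {ffun E -> option O}, 0 < prob psi ->
    forall e, e \notin dom psi -> 0 <= fwc e psi.

Definition minimal_dependency : Prop :=
  forall psi : {ffun E -> option O}, 0 < prob psi ->
    forall phi, 0 < p phi -> consistent phi psi -> fpart (dom psi) psi = f (dom psi) phi.

Definition Uplus : {set {ffun E -> O}} := [set phi | 0 < p phi].

Definition min_Uplus (g : {ffun E -> O} -> R) : R :=
  match [pick phi in Uplus] with
  | Some phi0 => \big[Num.min/g phi0]_(phi in Uplus) g phi
  | None => 0
  end.

(* deterministic policy: given the current observation, select an item or stop
   (re-selecting an already selected item has no effect, i.e. amounts to stopping) *)
Definition policy := {ffun E -> option O} -> option E.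

Definition pstep (pi : policy) (phi : {ffun E -> O}) (psi : {ffun E -> option O}) :=
  match pi psi with
  | Some e => if psi e == None then extend psi e (phi e) else psi
  | None => psi
  end.

(* at most #|E| items can ever be selected *)
Definition run (pi : policy) (phi : {ffun E -> O}) : {ffun E -> option O} :=
  iter #|E| (pstep pi phi) [ffun=> None].

Definition sel_items (pi : policy) (phi : {ffun E -> O}) : {set E} := dom (run pi phi).

Definition fwc_policy (pi : policy) : R := min_Uplus (fun phi => f (sel_items pi phi) phi).

Definition sample_size (k : nat) (eps : R) : nat :=
  `|Num.ceil (#|E|%:R / k%:R * ln (eps^-1))|%N.

Definition candidates (psi : {ffun E -> option O}) (m : nat) : {set {set E}} :=
  [set H : {set E} | (H \subset ~: dom psi) && (#|H| == m)].

Definition wc_argmax_rule (sel : {ffun E -> option O} -> {set E} -> E) : Prop :=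
  forall psi (H : {set E}), 0 < prob psi -> (0 < #|H|)%N ->
    sel psi H \in H /\ forall e, e \in H -> fwc e psi <= fwc (sel psi H) psi.

(* expected (over the random sets H) utility f(E(pi^f, phi), phi) obtained when
   r steps remain, the current step is t (1-indexed) and the observation is psi;
   H is uniform among the subsets of E \ dom psi of size min(s, n - t + 1) *)
Fixpoint greedy_val (sel : {ffun E -> option O} -> {set E} -> E) (s : nat)
    (phi : {ffun E -> O}) (r t : nat) (psi : {ffun E -> option O}) : R :=
  match r with
  | 0 => f (dom psi) phi
  | r'.+1 =>
      let Hs := candidates psi (minn s (#|E| + 1 - t)) in
      (#|Hs|%:R)^-1 *
        \sum_(H in Hs) greedy_val sel s phi r' t.+1 (extend psi (sel psi H) (phi (sel psi H)))
  end.

Definition greedy_fwc (sel : {ffun E -> option O} -> {set E} -> E) (k : nat) (eps : R) : R :=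
  min_Uplus (fun phi => greedy_val sel (sample_size k eps) phi k 1 [ffun=> None]).

Definition greedy_evals (k : nat) (eps : R) : nat :=
  \sum_(1 <= t < k.+1) minn (sample_size k eps) (#|E| + 1 - t).

End AdaptiveWC.

From HB Require Import structures.
From mathcomp Require Import all_boot all_order all_algebra.
From mathcomp Require Import all_classical all_reals all_analysis.
(* Re-imported so that set0, subsetP, ... refer to finite sets, not classical ones. *)
From mathcomp Require Import fintype finset.
From mathcomp Require Import ring lra zify.
Import Order.TTheory GRing.Theory Num.Theory.
Local Open Scope ring_scope.
Set Implicit Arguments. Unset Strict Implicit. Unset Printing Implicit Defensive.

(* Fix a deterministic policy pi selecting at most k items, with worst-case
   utility F.  The proof has three ingredients.
   - Adversary bound: from every positive-probability observation psi,
     F <= f(dom psi, psi) + sum_{e in A} f_wc(e | psi) for some set A of at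
     most k unobserved items.  Run pi against an adversary answering every new
     item with a state realizing its worst-case marginal; worst-case
     submodularity bounds each increment by f_wc(e | psi), and minimal
     dependency plus monotonicity relate the end value to F.
   - Sampling lemma: a uniform random subset H of size min(s, m) of the m
     unobserved items meets each i-subset of A with probability at least
     (1 - eps) i / k, so the expected best f_wc(e | psi) over H is at least
     (1 - eps)/k times the sum over A, hence at least (1 - eps)/k (F - current).
   - Along a realization, the utility grows at least by f_wc of the chosen
     item; unrolling k rounds closes all but (1 - (1 - eps)/k)^k <= 1/e + eps
     of the gap to F.
   The evaluation count is k s <= n ln(1/eps) + k. *)

Lemma ffact_cross_le (a b h : nat) : (a <= b)%N -> (a ^_ h * b ^ h <= b ^_ h * a ^ h)%N.
Proof.
move=> le_ab; elim: h => [|h IH]; first by rewrite !ffactn0 !expn0.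
have step : ((a - h) * b <= (b - h) * a)%N by nia.
rewrite !ffactnSr !expnS.
have := leq_mul IH step.
have -> : (a ^_ h * b ^ h * ((a - h) * b) = a ^_ h * (a - h) * (b * b ^ h))%N by ring.
by have -> : (b ^_ h * a ^ h * ((b - h) * a) = b ^_ h * (b - h) * (a * a ^ h))%N by ring.
Qed.

Lemma bin_cross_le (a b h : nat) : (a <= b)%N -> ('C(a, h) * b ^ h <= 'C(b, h) * a ^ h)%N.
Proof.
move=> le_ab; have := ffact_cross_le h le_ab; rewrite -!bin_ffact.
rewrite [('C(a, h) * _ * _)%N]mulnAC [('C(b, h) * _ * _)%N]mulnAC.
by rewrite leq_pmul2r ?fact_gt0.
Qed.

(* The h-subsets of D meeting B are those not drawn from D :\: B. *)
Lemma card_hitting_draws (R : pzRingType) (T : finType) (D B : {set T}) (h : nat) :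
  B \subset D ->
  #|[set H in [set H : {set T} | (H \subset D) && (#|H| == h)] | H :&: B != set0]|%:R =
  'C(#|D|, h)%:R - 'C(#|D| - #|B|, h)%:R :> R.
Proof.
move=> sBD.
set X := [set H : {set T} | (H \subset D) && (#|H| == h)].
set P := [set H : {set T} | H :&: B == set0].
have cardX : #|X| = 'C(#|D|, h) by rewrite -cards_draws.
have cardXP : #|X :&: P| = 'C(#|D| - #|B|, h).
  have -> : X :&: P = [set H : {set T} | H \subset D :\: B & #|H| == h].
    apply/setP => H; rewrite !inE subsetD setI_eq0.
    by case: (H \subset D); case: [disjoint H & B]; case: (#|H| == h).
  by rewrite cards_draws cardsD (setIidPr sBD).
have -> : [set H in X | H :&: B != set0] = X :\: P.
  by apply/setP => H; rewrite !inE andbC.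
have := cardsID P X; rewrite cardX cardXP => <-.
by rewrite natrD addrC addKr.
Qed.

Section HittingProbability.
Variable R : realFieldType.

Lemma hit_pow_cross (x y : R) (s : nat) : 0 <= x -> x <= y -> y <= 1 ->
  x * (1 - (1 - y) ^+ s) <= y * (1 - (1 - x) ^+ s).
Proof.
move=> x0 xy y1; elim: s => [|s IH]; first by rewrite !expr0 !subrr !mulr0.
have ax : 0 <= 1 - (1 - x) ^+ s by rewrite subr_ge0 exprn_ile1 //; lra.
have unfold z : 1 - (1 - z) ^+ s.+1 = z + (1 - z) * (1 - (1 - z) ^+ s) :> R.
  by rewrite exprS; ring.
rewrite !unfold.
have h1 : x * ((1 - y) * (1 - (1 - y) ^+ s)) <= (1 - y) * (y * (1 - (1 - x) ^+ s)).
  by rewrite mulrCA; apply: ler_wpM2l => //; lra.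
have h2 : (1 - y) * (y * (1 - (1 - x) ^+ s)) <= y * ((1 - x) * (1 - (1 - x) ^+ s)).
  by rewrite mulrCA; apply: ler_wpM2l; [lra | apply: ler_wpM2r => //; lra].
have := le_trans h1 h2; rewrite !mulrDr; lra.
Qed.

Lemma miss_pow_le (x y eps : R) (s : nat) : 0 < x -> x <= y -> y <= 1 ->
  (1 - y) ^+ s <= eps -> (1 - x) ^+ s <= 1 - (1 - eps) * (x / y).
Proof.
move=> x0 xy y1 hy.
have y0 : 0 < y by apply: lt_le_trans xy.
have := hit_pow_cross s (ltW x0) xy y1.
have : x * (1 - eps) <= x * (1 - (1 - y) ^+ s) by apply: ler_wpM2l; [exact: ltW | lra].
move=> h1 h2.
have -> : (1 - eps) * (x / y) = x * (1 - eps) / y by ring.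
suff : x * (1 - eps) / y <= 1 - (1 - x) ^+ s by lra.
by rewrite ler_pdivrMr // [_ * y]mulrC; apply: le_trans h1 h2.
Qed.

(* Drawing s of m items without replacement misses i given ones at least as
   rarely as drawing with replacement does. *)
Lemma miss_count_le (m i s : nat) : (i <= m)%N -> (0 < m)%N ->
  'C(m - i, s)%:R <= 'C(m, s)%:R * (1 - i%:R / m%:R) ^+ s :> R.
Proof.
move=> im m0.
have mR : 0 < m%:R :> R by rewrite ltr0n.
have -> : 1 - i%:R / m%:R = (m - i)%:R / m%:R :> R.
  by rewrite natrB // mulrBl divff ?gt_eqF.
rewrite expr_div_n mulrA ler_pdivlMr ?exprn_gt0 //.
by rewrite -!natrX -!natrM ler_nat bin_cross_le // leq_subr.
Qed.

(* A uniformly random (min s m)-subset of an m-set meets a fixed i-subset with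
   probability at least (1 - eps) i / k, provided s is large enough for
   (1 - k/m)^s <= eps; this is the sampling guarantee of stochastic greedy. *)
Lemma hit_count_lower (eps : R) (m s k i : nat) : (0 < s)%N -> (0 < i)%N ->
  (i <= k)%N -> (i <= m)%N -> 0 < eps <= 1 ->
  ((k <= m)%N -> (s < m)%N -> (1 - k%:R / m%:R) ^+ s <= eps) ->
  (1 - eps) / k%:R * i%:R * 'C(m, minn s m)%:R <=
    'C(m, minn s m)%:R - 'C(m - i, minn s m)%:R.
Proof.
move=> s0 i0 ik im /andP[eps0 eps1] hpow.
have m0 : (0 < m)%N by apply: leq_trans im.
have [kR iR mR] : [/\ 0 < k%:R :> R, 0 < i%:R :> R & 0 < m%:R :> R].
  by rewrite !ltr0n (leq_trans i0 ik) i0 m0.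
have ikR : i%:R <= k%:R :> R by rewrite ler_nat.
set c := (1 - eps) / k%:R * i%:R.
have c_le1 : c <= 1.
  rewrite /c mulrAC ler_pdivrMr // mul1r; apply: le_trans ikR; rewrite ler_piMl //; lra.
case: (leqP m s) => [le_ms | lt_sm].
  rewrite (@bin_small (m - i)) ?subr0; first by apply: ler_piMl.
  by rewrite ltn_subrL i0 m0.
set K := minn k m.
have KR : 0 < K%:R :> R by rewrite ltr0n leq_min (leq_trans i0 ik) m0.
have iK : i%:R <= K%:R :> R by rewrite ler_nat leq_min ik im.
have hK : (1 - K%:R / m%:R) ^+ s <= eps.
  rewrite /K; case: (leqP k m) => hkm; first exact: hpow.
  by rewrite divff ?gt_eqF // subrr expr0n gt_eqF // ltW.
have y1 : K%:R / m%:R <= 1 :> R by rewrite ler_pdivrMr // mul1r ler_nat geq_minr.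
have x0 : 0 < i%:R / m%:R :> R by apply: divr_gt0.
have mV0 : 0 <= m%:R^-1 :> R by rewrite invr_ge0 ltW.
have hmiss := miss_pow_le x0 (ler_wpM2r mV0 iK) y1 hK.
have ratio : c <= (1 - eps) * (i%:R / m%:R / (K%:R / m%:R)).
  have -> : i%:R / m%:R / (K%:R / m%:R) = i%:R / K%:R :> R.
    by field; rewrite !gt_eqF.
  rewrite /c -mulrA [_^-1 * _]mulrC.
  apply: ler_wpM2l; first lra.
  apply: ler_wpM2l; first exact: ltW.
  by rewrite lef_pV2 ?posrE // ler_nat geq_minl.
have C0 : 0 <= 'C(m, s)%:R :> R by rewrite ler0n.
have miss_c := ler_wpM2l C0 (le_trans hmiss (lerB (lexx 1) ratio)).
have := le_trans (miss_count_le s im m0) miss_c; nra.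
Qed.

End HittingProbability.

Section SamplingLemma.
Variables (R : realFieldType) (T : finType) (Hs : {set {set T}}) (c : R).
Implicit Types (g : T -> R) (A B H : {set T}) (a x : T).

Definition max_in (g : T -> R) (A H : {set T}) : R := \big[Num.max/0]_(e in H :&: A) g e.

Definition hits (B : {set T}) : nat := #|[set H in Hs | H :&: B != set0]|.

Lemma max_in_ge0 g A H : 0 <= max_in g A H.
Proof. exact: bigmax_ge_id. Qed.

Lemma max_in_ge g A H x : x \in H :&: A -> g x <= max_in g A H.
Proof. by move=> hx; apply: le_bigmax_cond. Qed.

Lemma max_in_attained g A H :
  max_in g A H = 0 \/ exists2 x, x \in H :&: A & max_in g A H = g x.
Proof.
rewrite /max_in; elim/big_ind: _ => [|x y hx hy|x hx]; [by left | | by right; exists x].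
by rewrite /Num.max; case: ifP => _; [exact: hy | exact: hx].
Qed.

Lemma max_in_peel g A H a : a \in A -> (forall e, e \in A -> g a <= g e) ->
  (forall e, e \in A -> 0 <= g e) ->
  (if H :&: A != set0 then g a else 0) + max_in (fun e => g e - g a) (A :\ a) H
    <= max_in g A H.
Proof.
move=> aA amin g0.
have sub : H :&: (A :\ a) \subset H :&: A by apply: setIS; apply: subsetDl.
case: (max_in_attained (fun e => g e - g a) (A :\ a) H) => [->|[x hx ->]].
  rewrite addr0; case: (boolP (H :&: A != set0)) => [/set0Pn [y hy] | _].
    by apply: le_trans (max_in_ge g hy); apply: amin; move: hy; rewrite in_setI => /andP[].
  exact: max_in_ge0.
have hxA : x \in H :&: A by apply: (subsetP sub).
have -> : H :&: A != set0 by apply/set0Pn; exists x.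
by rewrite addrC subrK; apply: max_in_ge.
Qed.

Lemma sum_hits A (v : R) :
  \sum_(H in Hs) (if H :&: A != set0 then v else 0) = (hits A)%:R * v.
Proof.
rewrite -big_mkcondr /= mulr_natl -sumr_const.
by apply: eq_bigl => H; rewrite inE.
Qed.

(* Induction on #|A|, peeling off a minimizer of g. *)
Lemma sampling_lemma (A : {set T}) (g : T -> R) :
  (forall B, B \subset A -> c * #|B|%:R * #|Hs|%:R <= (hits B)%:R) ->
  (forall e, e \in A -> 0 <= g e) ->
  c * #|Hs|%:R * \sum_(e in A) g e <= \sum_(H in Hs) max_in g A H.
Proof.
move: {2}#|A| (erefl #|A|) => n; elim: n A g => [|n IH] A g cardA hitsA g0.
  have -> : A = set0 by apply/eqP; rewrite -cards_eq0 cardA.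
  by rewrite big_set0 mulr0; apply: sumr_ge0 => H _; apply: max_in_ge0.
have /set0Pn [a0 a0A] : A != set0 by rewrite -card_gt0 cardA.
have [a aA' amin] := Order.TotalTheory.arg_minP g a0A.
have aA : a \in A by exact: aA'.
set v := g a.
have cardAa : #|A :\ a| = n by have := cardsD1 a A; rewrite aA cardA add1n => -[].
have hitsAa B : B \subset A :\ a -> c * #|B|%:R * #|Hs|%:R <= (hits B)%:R.
  by move=> sB; apply: hitsA; apply: subset_trans sB (subsetDl _ _).
have g0' e : e \in A :\ a -> 0 <= g e - v.
  by rewrite in_setD1 => /andP[_ eA]; rewrite subr_ge0; apply: amin.
have IHa := IH _ _ cardAa hitsAa g0'.
have peel : \sum_(H in Hs) ((if H :&: A != set0 then v else 0) +
    max_in (fun e => g e - v) (A :\ a) H) <= \sum_(H in Hs) max_in g A H.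
  by apply: ler_sum => H _; apply: max_in_peel.
rewrite big_split /= sum_hits in peel.
have hitsA' := hitsA A (subxx _); rewrite cardA in hitsA'.
rewrite (big_setD1 _ aA) /=; apply: le_trans peel.
set N := (#|Hs|%:R : R) in IHa hitsA' *.
rewrite sumrB sumr_const cardAa -mulr_natr in IHa.
set S := \sum_(i in A :\ a) g i in IHa *.
have h1 : c * n.+1%:R * N * v <= (hits A)%:R * v by apply: ler_wpM2r => //; apply: g0.
have -> : c * N * (v + S) = c * n.+1%:R * N * v + c * N * (S - v * n%:R).
  by rewrite -natr1; ring.
exact: lerD.
Qed.

End SamplingLemma.

Section SampleSize.
Variables (R : realType) (E : finType) (k : nat) (eps : R).
Hypotheses (k_gt0 : (0 < k)%N) (k_le : (k <= #|E|)%N) (eps_gt0 : 0 < eps) (eps_lt1 : eps < 1).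

Local Notation s := (sample_size E k eps).
Local Notation x := (#|E|%:R / k%:R * ln eps^-1 : R).

Lemma ln_inv_gt0 : 0 < ln eps^-1 :> R.
Proof. by apply: ln_gt0; rewrite invf_gt1. Qed.

Lemma sample_target_gt0 : 0 < x.
Proof.
apply: mulr_gt0; last exact: ln_inv_gt0.
by apply: divr_gt0; rewrite ltr0n //; apply: leq_trans k_le.
Qed.

Lemma sample_sizeE : s%:R = (Num.ceil x)%:~R :> R.
Proof.
rewrite /sample_size natr_absz ger0_norm //.
by rewrite ceil_ge0; apply: lt_trans sample_target_gt0; rewrite ltrN10.
Qed.

Lemma sample_size_bounds : x <= s%:R < x + 1.
Proof.
rewrite sample_sizeE ceil_ge /=.
have := ceilB1_lt x; rewrite intrB /=; lra.
Qed.

Lemma sample_size_gt0 : (0 < s)%N.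
Proof.
have /andP[+ _] := sample_size_bounds; rewrite -(ltr0n R).
exact: lt_le_trans sample_target_gt0.
Qed.

Lemma sample_miss_le (m : nat) : (k <= m)%N -> (m <= #|E|)%N ->
  (1 - k%:R / m%:R) ^+ s <= eps.
Proof.
move=> km mn.
have [kR mR] : 0 < k%:R :> R /\ 0 < m%:R :> R by rewrite !ltr0n (leq_trans k_gt0 km).
have nR : 0 < #|E|%:R :> R by rewrite ltr0n (leq_trans k_gt0 k_le).
have a0 : 0 <= 1 - k%:R / m%:R :> R by rewrite subr_ge0 ler_pdivrMr // mul1r ler_nat.
have a1 : 1 - k%:R / m%:R <= expR (- (k%:R / m%:R)) :> R by apply: expR_ge1Dx.
apply: le_trans (lerXn2r _ _ _ a1) _; rewrite ?nnegrE ?expR_ge0 // -expRM_natr.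
have epsE : expR (- ln eps^-1) = eps by rewrite lnV ?posrE // opprK lnK ?posrE.
rewrite -[X in _ <= X]epsE.
rewrite ler_expR mulNr lerN2.
have hL : ln eps^-1 <= k%:R / #|E|%:R * s%:R.
  have /andP[hx _] := sample_size_bounds.
  have -> : ln eps^-1 = k%:R / #|E|%:R * x by field; rewrite !gt_eqF.
  by apply: ler_wpM2l hx; apply: divr_ge0; apply: ltW.
apply: le_trans hL _; apply: ler_wpM2r; first by rewrite ler0n.
apply: ler_wpM2l; first exact: ltW.
by rewrite lef_pV2 ?posrE // ler_nat.
Qed.

Lemma greedy_evals_le : (greedy_evals E k eps)%:R <= #|E|%:R * ln eps^-1 + k%:R :> R.
Proof.
have evals_le : (greedy_evals E k eps <= k * s)%N.
  apply: (@leq_trans (\sum_(1 <= t < k.+1) s)).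
    by apply: leq_sum => t _; apply: geq_minl.
  by rewrite sum_nat_const_nat subn1.
apply: le_trans (_ : (k * s)%:R <= _); first by rewrite ler_nat.
have kR : 0 < k%:R :> R by rewrite ltr0n.
have /andP[_ /ltW hs] := sample_size_bounds.
rewrite natrM; apply: le_trans (ler_wpM2l (ltW kR) hs) _.
by rewrite le_eqVlt; apply/orP; left; apply/eqP; field; rewrite gt_eqF.
Qed.

End SampleSize.

Lemma greedy_rate_ge0 (R : realFieldType) (k : nat) (eps : R) : eps <= 1 ->
  0 <= (1 - eps) / k%:R.
Proof. by move=> e1; apply: divr_ge0; [rewrite subr_ge0 | exact: ler0n]. Qed.

Lemma greedy_rate_le1 (R : realFieldType) (k : nat) (eps : R) : (0 < k)%N -> 0 <= eps ->
  (1 - eps) / k%:R <= 1.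
Proof.
move=> k0 e0; have kR : 0 < k%:R :> R by rewrite ltr0n.
rewrite ler_pdivrMr // mul1r; apply: (@le_trans _ _ 1); last by rewrite ler1n.
by rewrite lerBlDr lerDl.
Qed.

(* e^(eps - 1) <= 1/e + eps on [0, 1]: e^eps <= 1 + eps e^eps and e^(eps - 1) <= 1. *)
Lemma expR_shift_le (R : realType) (eps : R) : 0 <= eps <= 1 ->
  expR (eps - 1) <= expR (-1) + eps.
Proof.
move=> /andP[e0 e1].
have split_exp : expR (eps - 1) = expR (-1) * expR eps by rewrite -expRD addrC.
have grow : expR eps <= 1 + eps * expR eps.
  by have := ler_wpM2l (expR_ge0 eps) (expR_ge1Dx (- eps)); rewrite expRxMexpNx_1; nra.
have small : eps * expR (eps - 1) <= eps by apply: ler_piMr => //; rewrite expR_le1; lra.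
have := ler_wpM2l (expR_ge0 (-1)) grow.
by rewrite mulrDr mulr1 mulrCA -split_exp; lra.
Qed.

(* (1 - (1 - eps)/k)^k <= e^(eps - 1) <= 1/e + eps: the greedy loss after k rounds. *)
Lemma greedy_loss_le (R : realType) (k : nat) (eps : R) : (0 < k)%N -> 0 < eps < 1 ->
  (1 - (1 - eps) / k%:R) ^+ k <= expR (-1) + eps.
Proof.
move=> k0 /andP[e0 e1].
have y1 := greedy_rate_le1 k0 (ltW e0).
apply: le_trans (lerXn2r _ _ _ (expR_ge1Dx (- ((1 - eps) / k%:R)))) _.
- by rewrite nnegrE subr_ge0.
- by rewrite nnegrE expR_ge0.
rewrite -expRM_natr mulNr divfK ?gt_eqF ?ltr0n // opprB.
by apply: expR_shift_le; rewrite (ltW e0) (ltW e1).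
Qed.

Lemma mean_affine (R : numFieldType) (I : finType) (A : {set I}) (a b : R) (x : I -> R) :
  (0 < #|A|)%N ->
  (#|A|%:R)^-1 * \sum_(i in A) (a + b * x i) = a + b * ((#|A|%:R)^-1 * \sum_(i in A) x i).
Proof.
move=> A0; have NA : #|A|%:R != 0 :> R by rewrite pnatr_eq0 -lt0n.
by rewrite big_split /= sumr_const -big_distrr /= -mulr_natr; field.
Qed.

Section PartialRealizations.
Variables (R : realType) (E O : finType).
Variables (p : {ffun E -> O} -> R) (f : {set E} -> {ffun E -> O} -> R).
Hypothesis p_ge0 : forall phi, 0 <= p phi.
Hypothesis mono : wc_monotone p f.
Hypothesis md : minimal_dependency p f.
Local Notation obs := {ffun E -> option O}.
Implicit Types (phi : {ffun E -> O}) (psi q J : obs) (e : E) (o : O) (S T : {set E}).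

Lemma prob_ge phi psi : consistent phi psi -> p phi <= prob p psi.
Proof. by move=> c; rewrite /prob (bigD1 phi) //= lerDl sumr_ge0. Qed.

Lemma prob_gt0 phi psi : 0 < p phi -> consistent phi psi -> 0 < prob p psi.
Proof. by move=> h c; apply: lt_le_trans h (prob_ge c). Qed.

Lemma prob_witness psi : 0 < prob p psi -> exists phi, 0 < p phi /\ consistent phi psi.
Proof.
case: (boolP [exists phi, (0 < p phi) && consistent phi psi]).
  by case/existsP => phi /andP[h1 h2]; exists phi.
move/existsPn => nowit; rewrite /prob big1 ?ltxx // => phi c.
have := nowit phi; rewrite c andbT; move: (p_ge0 phi); rewrite le_eqVlt.
by case/orP => [/eqP <-|->].
Qed.

Lemma outcomes_mem phi psi e : 0 < p phi -> consistent phi psi ->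
  phi e \in outcomes p e psi.
Proof. by move=> h c; rewrite inE; apply/existsP; exists phi; rewrite h c eqxx. Qed.

Lemma fwc_le e psi o : o \in outcomes p e psi -> fwc p f e psi <= marg p f e psi o.
Proof.
move=> ho; rewrite /fwc; case: pickP => [w _ | nopick]; first exact: bigmin_le_cond.
by move: (nopick o); rewrite ho.
Qed.

Lemma fwc_attained e psi o1 : o1 \in outcomes p e psi ->
  exists2 o, o \in outcomes p e psi & fwc p f e psi = marg p f e psi o.
Proof.
move=> ho; rewrite /fwc; case: pickP => [w Hw | nopick]; last by move: (nopick o1); rewrite ho.
elim/big_ind: _ => [|x y [ox Hx ->] [oy Hy ->]|o Ho]; [by exists w | | by exists o].
by rewrite /Num.min; case: ifP => _; [exists ox | exists oy].
Qed.

Lemma dom_none : dom ([ffun=> None] : obs) = set0.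
Proof. by apply/setP => x; rewrite !inE ffunE. Qed.

Lemma consistent_none phi : consistent phi [ffun=> None].
Proof. by apply/forallP => x; rewrite ffunE. Qed.

Lemma dom_extend psi e o : dom (extend psi e o) = e |: dom psi.
Proof. by apply/setP => x; rewrite !inE ffunE; case: (x == e). Qed.

Lemma consistent_extend phi psi e : consistent phi psi ->
  consistent phi (extend psi e (phi e)).
Proof.
move=> /forallP c; apply/forallP => x; rewrite ffunE.
by case: (x =P e) => [->|_]; [rewrite eqxx orbT | exact: c].
Qed.

Lemma subpart_refl psi : subpart psi psi.
Proof. by apply/forallP => x; rewrite eqxx orbT. Qed.

Lemma subpart_trans psi1 psi2 psi3 :
  subpart psi1 psi2 -> subpart psi2 psi3 -> subpart psi1 psi3.
Proof.
move=> /forallP h1 /forallP h2; apply/forallP => x.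
by move: (h1 x) (h2 x); case: (psi1 x) => //= a1; case: (psi2 x) => //= a2 /eqP ->.
Qed.

Lemma subpart_consistent phi psi1 psi2 : subpart psi1 psi2 -> consistent phi psi2 ->
  consistent phi psi1.
Proof.
move=> /forallP h1 /forallP h2; apply/forallP => x.
by move: (h1 x) (h2 x); case: (psi1 x) => //= a1; case: (psi2 x) => //= a2 /eqP ->.
Qed.

Lemma subpart_extend psi e o : psi e = None -> subpart psi (extend psi e o).
Proof.
move=> he; apply/forallP => x; rewrite ffunE.
by case: (x =P e) => [->|_]; rewrite ?he ?eqxx ?orbT.
Qed.

Definition restr phi S : obs := [ffun x => if x \in S then Some (phi x) else None].

Lemma dom_restr phi S : dom (restr phi S) = S.
Proof. by apply/setP => x; rewrite !inE ffunE; case: (x \in S). Qed.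

Lemma consistent_restr phi S : consistent phi (restr phi S).
Proof. by apply/forallP => x; rewrite ffunE; case: (x \in S); rewrite ?eqxx ?orbT. Qed.

Lemma fpart_md phi psi : 0 < p phi -> consistent phi psi ->
  fpart p f (dom psi) psi = f (dom psi) phi.
Proof. by move=> hp c; apply: md => //; apply: prob_gt0 hp c. Qed.

Lemma f_gain_ge phi psi e : 0 < p phi -> consistent phi psi ->
  f (dom psi) phi + fwc p f e psi <= f (e |: dom psi) phi.
Proof.
move=> hp c; have := fwc_le (outcomes_mem e hp c).
rewrite /marg (fpart_md hp c).
have := fpart_md hp (consistent_extend e c); rewrite dom_extend => ->.
by rewrite lerBrDl.
Qed.

(* Worst-case monotonicity and minimal dependency make each f(., phi), phi in
   U^+, monotone. *)
Lemma f_mono phi S T : 0 < p phi -> S \subset T -> f S phi <= f T phi.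
Proof.
move=> hp; move: {2}#|T :\: S| (erefl #|T :\: S|) => n.
elim: n S => [|n IH] S cardD sST.
  have /eqP : T :\: S = set0 by apply/eqP; rewrite -cards_eq0 cardD.
  by rewrite setD_eq0 => sTS; rewrite (eqP (_ : S == T)) // eqEsubset sST sTS.
have /set0Pn [e] : T :\: S != set0 by rewrite -card_gt0 cardD.
rewrite inE => /andP [eS eT].
have step : f S phi <= f (e |: S) phi.
  have c := consistent_restr phi S.
  have := mono (prob_gt0 hp c); rewrite dom_restr => /(_ e eS) fwc0.
  by have := f_gain_ge e hp c; rewrite dom_restr; lra.
apply: le_trans step _; apply: IH; last by rewrite subUset sub1set eT sST.
have := cardsD1 e (T :\: S); rewrite cardD !inE eS eT /= add1n => -[->].
by apply: eq_card => x; rewrite !inE negb_or; case: (x == e); case: (x \in S).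
Qed.

Lemma min_Uplus_le (g : {ffun E -> O} -> R) phi : phi \in Uplus p -> min_Uplus p g <= g phi.
Proof.
move=> hphi; rewrite /min_Uplus; case: pickP => [phi0 _ | nopick]; first exact: bigmin_le_cond.
by move: (nopick phi); rewrite hphi.
Qed.

Lemma min_Uplus_ge (g : {ffun E -> O} -> R) x : (exists phi, phi \in Uplus p) ->
  (forall phi, phi \in Uplus p -> x <= g phi) -> x <= min_Uplus p g.
Proof.
move=> [phi1 h1] lb; rewrite /min_Uplus; case: pickP => [phi0 h0 | nopick].
  by apply: le_bigmin => //; apply: lb.
by move: (nopick phi1); rewrite h1.
Qed.

(* Adversary argument: run a policy pi from the observation psi0 while an
   adversary answers each new item with a state realizing its worst-case
   marginal.  By worst-case submodularity each answer raises the conditional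
   utility by at most f_wc(e | psi0), so pi gains at most the sum of these over
   the (at most k) items it selects. *)
Section Adversary.
Hypothesis subm : wc_submodular p f.
Variables (pi : policy E O) (psi0 : obs).
Hypothesis pr0 : 0 < prob p psi0.

Definition worst_state J e : option O :=
  [pick o | (o \in outcomes p e J) && (marg p f e J o == fwc p f e J)].

(* The state is (q, J): q is what pi has observed, J is psi0 together with the
   adversary's answers. *)
Definition adv_step (st : obs * obs) : obs * obs :=
  let: (q, J) := st in
  match pi q with
  | Some e =>
      if q e == None then
        match J e with
        | Some o => (extend q e o, J)
        | None => if worst_state J e is Some o then (extend q e o, extend J e o) else st
        end
      else st
  | None => st
  end.

Definition adv_inv (st : obs * obs) : Prop :=
  let: (q, J) := st in
  [/\ 0 < prob p J, subpart psi0 J, subpart q J, dom J = dom psi0 :|: dom q &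
      fpart p f (dom J) J <=
        fpart p f (dom psi0) psi0 + \sum_(e in dom q :\: dom psi0) fwc p f e psi0].

Lemma worst_state_some J e : 0 < prob p J -> exists o, worst_state J e = Some o.
Proof.
move=> hJ; have [phi [hp c]] := prob_witness hJ.
have [ob hob he] := fwc_attained (outcomes_mem e hp c).
rewrite /worst_state; case: pickP => [w _ | nopick]; first by exists w.
by move: (nopick ob); rewrite hob he eqxx.
Qed.

Lemma subpart_extend_ext q J e o : subpart q J -> J e = Some o -> subpart (extend q e o) J.
Proof.
move=> /forallP sq Je; apply/forallP => x; rewrite ffunE.
by case: (x =P e) => [->|_]; [rewrite Je eqxx orbT | exact: sq].
Qed.

Lemma adv_inv_known q J e o : adv_inv (q, J) -> q e = None -> J e = Some o ->
  adv_inv (extend q e o, J).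
Proof.
case=> hJ sp0 sq hd hf qe Je.
have e0 : e \in dom psi0.
  have : e \in dom J by rewrite inE Je.
  by rewrite hd in_setU [e \in dom q]inE qe eqxx orbF.
have sameD : (e |: dom q) :\: dom psi0 = dom q :\: dom psi0.
  by apply/setP => x; rewrite !in_setD in_setU1; case: (x =P e) => [->|]; rewrite ?e0.
split; rewrite ?dom_extend ?sameD //; first exact: subpart_extend_ext.
by rewrite hd setUCA; apply/esym/setUidPr; rewrite sub1set in_setU e0.
Qed.

Lemma adv_inv_fresh q J e o : adv_inv (q, J) -> q e = None -> J e = None ->
  o \in outcomes p e J -> marg p f e J o = fwc p f e J ->
  adv_inv (extend q e o, extend J e o).
Proof.
case=> hJ sp0 sq hd hf qe Je hout hmarg.
have eJ : e \notin dom J by rewrite inE Je eqxx.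
have e0 : e \notin dom psi0 by move: eJ; rewrite hd in_setU negb_or => /andP[].
have eq : e \notin dom q by rewrite inE qe eqxx.
split.
- move: hout; rewrite inE => /existsP [phi /and3P [hp c /eqP <-]].
  exact: prob_gt0 hp (consistent_extend _ c).
- exact: subpart_trans sp0 (subpart_extend _ Je).
- apply/forallP => y; rewrite !ffunE; case: (y =P e) => [_|_]; first by rewrite eqxx orbT.
  exact: (forallP sq).
- by rewrite !dom_extend hd setUCA.
have -> : dom (extend q e o) :\: dom psi0 = e |: (dom q :\: dom psi0).
  by rewrite dom_extend setDUl (setDidPl _) // disjoints1.
rewrite big_setU1 ?in_setD ?(negbTE eq) ?andbF //=.
have -> : fpart p f (dom (extend J e o)) (extend J e o) = fpart p f (dom J) J + fwc p f e J.
  by rewrite -hmarg /marg dom_extend addrC subrK.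
rewrite [fwc p f e psi0 + _]addrC addrA; apply: lerD => //.
exact: subm pr0 hJ sp0 e eJ.
Qed.

Lemma adv_inv_step st : adv_inv st -> adv_inv (adv_step st) /\ subpart st.2 (adv_step st).2.
Proof.
case: st => q J inv; have [hJ _ _ _ _] := inv; rewrite /adv_step.
case: (pi q) => [e|]; last by split => //; apply: subpart_refl.
case: eqP => [qe|_]; last by split => //; apply: subpart_refl.
case Je: (J e) => [a|].
  by split; [apply: adv_inv_known | apply: subpart_refl].
have [b hb] := worst_state_some e hJ; rewrite hb.
move: hb; rewrite /worst_state; case: pickP => // b' /andP [hout /eqP hmarg] [<-].
by split; [apply: adv_inv_fresh | apply: subpart_extend].
Qed.

Definition adv_start : obs * obs := ([ffun=> None], psi0).

Lemma adv_inv_iter j : adv_inv (iter j adv_step adv_start).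
Proof.
elim: j => [|j IH]; last by rewrite iterS; case: (adv_inv_step IH).
split => //; rewrite ?dom_none ?setU0 ?set0D ?big_set0 ?addr0 //.
- exact: subpart_refl.
- by apply/forallP => x; rewrite ffunE.
Qed.

Lemma adv_record_grows j d :
  subpart (iter j adv_step adv_start).2 (iter (d + j) adv_step adv_start).2.
Proof.
elim: d => [|d IH]; first exact: subpart_refl.
rewrite addSn iterS; apply: subpart_trans IH _.
by case: (adv_inv_step (adv_inv_iter (d + j))).
Qed.

Lemma adv_step_pstep st phi : adv_inv st -> consistent phi (adv_step st).2 ->
  (adv_step st).1 = pstep pi phi st.1.
Proof.
case: st => q J [hJ _ _ _ _]; rewrite /adv_step /pstep.
case: (pi q) => [e|] //; case: eqP => // _.
case Je: (J e) => [a|] /=.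
  by move/forallP => /(_ e); rewrite Je /= => /eqP [->].
have [b hb] := worst_state_some e hJ; rewrite hb /=.
by move/forallP => /(_ e); rewrite ffunE eqxx /= => /eqP [->].
Qed.

Lemma adv_run phi j : (j <= #|E|)%N -> consistent phi (iter #|E| adv_step adv_start).2 ->
  (iter j adv_step adv_start).1 = iter j (pstep pi phi) [ffun=> None].
Proof.
move=> + c; elim: j => [|j IH] hj //.
rewrite !iterS -IH ?(ltnW hj) //; apply: adv_step_pstep; first exact: adv_inv_iter.
rewrite -iterS; apply: subpart_consistent c.
by have := adv_record_grows j.+1 (#|E| - j.+1); rewrite subnK.
Qed.

Lemma adversary_bound k : (forall phi, 0 < p phi -> (#|sel_items pi phi| <= k)%N) ->
  exists A : {set E}, [/\ A \subset ~: dom psi0, (#|A| <= k)%N &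
    fwc_policy p f pi <= fpart p f (dom psi0) psi0 + \sum_(e in A) fwc p f e psi0].
Proof.
move=> hk; have := adv_inv_iter #|E|.
case def_st: (iter #|E| adv_step adv_start) => [q J] [hJ sp0 sq hd hf].
have [phi [hp c]] := prob_witness hJ.
have hrun : run pi phi = q.
  have c' : consistent phi (iter #|E| adv_step adv_start).2 by rewrite def_st.
  by rewrite /run -(adv_run (leqnn _) c') def_st.
exists (dom q :\: dom psi0); split.
- by apply/subsetP => x; rewrite in_setD in_setC => /andP[].
- by apply: leq_trans (hk phi hp); rewrite /sel_items hrun subset_leq_card // subsetDl.
apply: le_trans hf.
apply: le_trans (min_Uplus_le _ (_ : phi \in Uplus p)) _; first by rewrite inE.
rewrite /sel_items hrun (fpart_md hp c); apply: f_mono hp _.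
by rewrite hd subsetUr.
Qed.

End Adversary.

Section GreedyStep.
Variable sel : obs -> {set E} -> E.
Variables (k : nat) (eps : R).
Hypotheses (k_gt0 : (0 < k)%N) (k_le : (k <= #|E|)%N) (eps_gt0 : 0 < eps) (eps_lt1 : eps < 1).
Hypothesis selP : wc_argmax_rule p f sel.
Variable F : R.
Hypothesis F_bound : forall psi, 0 < prob p psi -> exists A : {set E},
  [/\ A \subset ~: dom psi, (#|A| <= k)%N &
      F <= fpart p f (dom psi) psi + \sum_(e in A) fwc p f e psi].

Local Notation s := (sample_size E k eps).
Local Notation c := ((1 - eps) / k%:R).
Local Notation round psi t := (candidates psi (minn s (#|E| + 1 - t))).

Lemma greedy_choice psi m H : 0 < prob p psi -> (0 < m)%N -> H \in candidates psi m ->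
  sel psi H \notin dom psi /\ forall e, e \in H -> fwc p f e psi <= fwc p f (sel psi H) psi.
Proof.
move=> pr m0; rewrite inE => /andP [sub /eqP cH].
have H0 : (0 < #|H|)%N by rewrite cH.
have [sH smax] := selP pr H0.
by split => //; have := subsetP sub _ sH; rewrite in_setC.
Qed.

Lemma round_size psi t : #|dom psi| = t.-1 -> (0 < t)%N -> (t <= k)%N ->
  (#|E| + 1 - t = #|~: dom psi|)%N.
Proof. by move=> hd t0 tk; have := cardsC (dom psi); rewrite hd; lia. Qed.

Lemma round_nonempty psi t : #|dom psi| = t.-1 -> (0 < t)%N -> (t <= k)%N ->
  (0 < #|round psi t|)%N.
Proof.
move=> hd t0 tk; by rewrite (round_size hd t0 tk) cards_draws bin_gt0 geq_minr.
Qed.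

(* Expected gain of one round: combine the bound on F with the sampling lemma,
   whose hitting hypothesis is the counting bound hit_count_lower. *)
Lemma greedy_expected_gain psi t : 0 < prob p psi -> #|dom psi| = t.-1 ->
  (0 < t)%N -> (t <= k)%N ->
  c * (F - fpart p f (dom psi) psi) <=
    (#|round psi t|%:R)^-1 * \sum_(H in round psi t) fwc p f (sel psi H) psi.
Proof.
move=> pr hd t0 tk.
have N0 := round_nonempty hd t0 tk.
rewrite (round_size hd t0 tk) in N0 *; set m := #|~: dom psi|; set Hs := candidates psi _.
have m0 : (0 < m)%N by have := round_size hd t0 tk; lia.
have cHs : #|Hs| = 'C(m, minn s m) by rewrite cards_draws.
have [A [sA cA hFA]] := F_bound pr.
set g := fun e => fwc p f e psi.
have g0 e : e \in A -> 0 <= g e.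
  by move=> eA; apply: mono => //; have := subsetP sA _ eA; rewrite in_setC.
have hitsA (B : {set E}) : B \subset A -> c * #|B|%:R * #|Hs|%:R <= (hits Hs B)%:R.
  move=> sB; have sBD : B \subset ~: dom psi by apply: subset_trans sB sA.
  rewrite /hits /Hs /candidates card_hitting_draws // -/m -cHs cHs.
  case: (posnP #|B|) => [->|i0]; first by rewrite mulr0 mul0r subn0 subrr.
  apply: hit_count_lower => //.
  - exact: sample_size_gt0.
  - exact: leq_trans (subset_leq_card sB) cA.
  - exact: subset_leq_card.
  - by rewrite eps_gt0 ltW.
  move=> km _; apply: sample_miss_le => //.
  by have := round_size hd t0 tk; lia.
have max_le : \sum_(H in Hs) max_in g A H <= \sum_(H in Hs) g (sel psi H).
  have h0 : (0 < minn s m)%N by rewrite leq_min sample_size_gt0.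
  apply: ler_sum => H HH; have [sn smax] := greedy_choice pr h0 HH.
  apply: bigmax_le; first exact: mono pr _ sn.
  by move=> e; rewrite in_setI => /andP [eH _]; apply: smax.
have NR : 0 < #|Hs|%:R :> R by rewrite ltr0n.
rewrite ler_pdivlMl // mulrA; apply: le_trans (le_trans (sampling_lemma hitsA g0) max_le).
have gap : F - fpart p f (dom psi) psi <= \sum_(e in A) g e by rewrite lerBlDl.
by have := ler_wpM2l (mulr_ge0 (greedy_rate_ge0 _ (ltW eps_lt1)) (ltW NR)) gap; rewrite [#|Hs|%:R * _]mulrC.
Qed.

Lemma greedy_unroll phi r t psi : 0 < p phi -> consistent phi psi ->
  #|dom psi| = t.-1 -> (0 < t)%N -> (r + t <= k.+1)%N ->
  F - (1 - c) ^+ r * (F - f (dom psi) phi) <= greedy_val f sel s phi r t psi.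
Proof.
move=> hp; elim: r t psi => [|r IH] t psi cons hd t0 hrt.
  by rewrite /= expr0 mul1r opprB addrC subrK.
have tk : (t <= k)%N by lia.
have pr := prob_gt0 hp cons.
have gain := greedy_expected_gain pr hd t0 tk; rewrite (fpart_md hp cons) in gain.
have h0 : (0 < minn s (#|E| + 1 - t))%N.
  by rewrite leq_min sample_size_gt0 //; have := round_size hd t0 tk; lia.
set cr := (1 - c) ^+ r; set a := F - cr * (F - f (dom psi) phi).
have cr0 : 0 <= cr by apply: exprn_ge0; rewrite subr_ge0 greedy_rate_le1 // ltW.
have step H : H \in round psi t -> a + cr * fwc p f (sel psi H) psi <=
    greedy_val f sel s phi r t.+1 (extend psi (sel psi H) (phi (sel psi H))).
  move=> HH; have [sn _] := greedy_choice pr h0 HH.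
  have hd' : #|dom (extend psi (sel psi H) (phi (sel psi H)))| = t.+1.-1.
    by rewrite dom_extend cardsU1 sn hd add1n prednK.
  apply: le_trans (IH _ _ (consistent_extend _ cons) hd' (ltn0Sn _) _); last by rewrite addnS.
  rewrite dom_extend /a -/cr; have := ler_wpM2l cr0 (f_gain_ge (sel psi H) hp cons); lra.
have N0 := round_nonempty hd t0 tk.
have NV : 0 <= (#|round psi t|%:R)^-1 :> R by rewrite invr_ge0 ler0n.
apply: le_trans (ler_wpM2l NV (ler_sum _ step)); rewrite mean_affine //.
by have := ler_wpM2l cr0 gain; rewrite exprS /a -/cr; nra.
Qed.

End GreedyStep.

Lemma Uplus_nonempty : \sum_phi p phi = 1 -> exists phi, phi \in Uplus p.
Proof.
move=> psum; have pr1 : 0 < prob p ([ffun=> None] : obs).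
  by rewrite /prob (eq_bigl xpredT) ?psum ?ltr01 // => phi; apply: consistent_none.
by have [phi [hp _]] := prob_witness pr1; exists phi; rewrite inE.
Qed.

Lemma fwc_policy_ge0 pi : (forall S phi, 0 <= f S phi) -> 0 <= fwc_policy p f pi.
Proof.
move=> f0; rewrite /fwc_policy /min_Uplus; case: pickP => // phi0 _.
by apply: le_bigmin.
Qed.

Lemma greedy_approx (sel : obs -> {set E} -> E) (k : nat) (eps : R) (pi : policy E O) :
  \sum_phi p phi = 1 -> (forall S phi, 0 <= f S phi) -> wc_submodular p f ->
  (0 < k)%N -> (k <= #|E|)%N -> 0 < eps < 1 -> wc_argmax_rule p f sel ->
  (forall phi, 0 < p phi -> (#|sel_items pi phi| <= k)%N) ->
  (1 - expR (-1) - eps) * fwc_policy p f pi <= greedy_fwc p f sel k eps.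
Proof.
move=> psum f0 subm k0 kn /andP[e0 e1] selP hk.
set F := fwc_policy p f pi.
have F_bound := fun psi (pr : 0 < prob p psi) => adversary_bound subm pr hk.
apply: min_Uplus_ge (Uplus_nonempty psum) _ => phi; rewrite inE => hp.
have := greedy_unroll k0 kn e0 e1 selP F_bound (r := k) (t := 1) hp (consistent_none phi).
rewrite dom_none cards0 => /(_ erefl (ltn0Sn _) (eq_leq (addn1 k))); apply: le_trans.
have loss := greedy_loss_le k0 (introT andP (conj e0 e1)).
have c0 : 0 <= (1 - (1 - eps) / k%:R) ^+ k.
  by apply: exprn_ge0; rewrite subr_ge0 (greedy_rate_le1 k0 (ltW e0)).
have := ler_wpM2r (fwc_policy_ge0 pi f0) loss.
have := mulr_ge0 c0 (f0 set0 phi); rewrite -/F; nra.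
Qed.
End PartialRealizations.

Unset Implicit Arguments.
Set Strict Implicit.

Theorem theorem3 (R : realType) (E O : finType)
    (p : {ffun E -> O} -> R) (f : {set E} -> {ffun E -> O} -> R)
    (k : nat) (eps : R) (sel : {ffun E -> option O} -> {set E} -> E) :
  (forall phi, 0 <= p phi) -> \sum_phi p phi = 1 ->
  (forall S phi, 0 <= f S phi) ->
  (0 < k)%N -> (k <= #|E|)%N -> 0 < eps < 1 ->
  wc_monotone p f -> wc_submodular p f -> minimal_dependency p f ->
  wc_argmax_rule p f sel ->
  (forall pi : policy E O, (forall phi, 0 < p phi -> (#|sel_items pi phi| <= k)%N) ->
     (1 - expR (-1) - eps) * fwc_policy p f pi <= greedy_fwc p f sel k eps)
  /\ (greedy_evals E k eps)%:R <= #|E|%:R * ln (eps^-1) + k%:R.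
Proof.
move=> p_ge0 psum f_ge0 k_gt0 k_le eps_range mono subm md selP; split.
  by move=> pi hk; apply: (greedy_approx p_ge0 mono md psum f_ge0 subm k_gt0 k_le eps_range selP hk).
by case/andP: eps_range => eps_gt0 eps_lt1; apply: greedy_evals_le.
Qed.
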